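(* Let $G=S_\infty$, let $M\subseteq S(G)$ be a minimal subflow and $\alpha\in M$. The following are equivalent: (1) $\alpha$ is an idempotent; (2) for every $<\,\in\mathrm{LO}(\omega)$, $(<,<^\alpha)\in A^M$; (3) there is $<\,\in\mathrm{LO}(\omega)$ with $(<,<^\alpha)\in A^M$.
   Context: View $S_\infty$ as the automorphism group of $\omega$ in the empty language, $\mathbf{A}_n=\{0,\dots,n-1\}$, $H_n$ the injections $n\to\omega$. $S(G)$ is the inverse limit of the spaces $\beta H_n$ along continuous extensions of restriction maps, $\alpha(n)$ the $n$-th coordinate, with right action $S\in(\alpha g)(m)$ iff $\{x\in H_n:x\circ g|_m\in S\}\in\alpha(n)$ (for $n$ large); $G$ is dense in $S(G)$. For $f\in H_m$, $\alpha\cdot f=(\alpha g)(m)$ for any $g$ extending $f$; product: $S\in(\alpha\gamma)(m)$ iff $\{f\in H_m:S\in\alpha\cdot f\}\in\gamma(m)$; idempotent means $\alpha\alpha=\alpha$. A minimal subflow is a nonempty closed $G$-invariant set with no proper such subset. $\mathrm{LO}(\omega)$ is the space of linear orders on $\omega$ (a closed subspace of $2^{H_2}$) with right action $a\,(<\cdot g)\,b\iff g(a)<g(b)$; for $\alpha\in S(G)$, $<^\alpha=<\cdot\alpha=\lim_{g_i\to\alpha}<\cdot g_i$ ($g_i\in G$). $\mathcal{F}^M_2=\{T\subseteq H_2:T\in\beta(2)\ \forall\beta\in M\}$; $\phi:H_2\to[\omega]^2$ forgets order and $\phi(\mathcal{F})=\{T:\phi^{-1}(T)\in\mathcal{F}\}$.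 $A(<_0,<_1)=\{\{a,b\}\in[\omega]^2:(a<_0b\iff a<_1b)\}$; $A^M=\{(<_0,<_1):A(<_0,<_1)\in\phi(\mathcal{F}^M_2)\}$. *)

From mathcomp Require Import all_boot.
From mathcomp Require Import boolp classical_sets.
Set Implicit Arguments. Unset Strict Implicit. Unset Printing Implicit Defensive.
Local Open Scope classical_set_scope.

(* H_n : injections n -> omega, encoded as duplicate-free sequences of
   naturals of length n (x i = nth 0 x i).  Subsets of H_n are sets of
   sequences; only their trace on H_n matters. *)
Definition Hn (n : nat) : set (seq nat) := [set s | uniq s /\ size s = n].

Definition restr (m : nat) (x : seq nat) : seq nat := take m x.

Definition compH (x f : seq nat) : seq nat := map (nth 0 x) f.

(* U is an ultrafilter on the set A (subsets taken up to trace on A):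
   an element of beta A. *)
Definition ultra_on {T : Type} (A : set T) (U : set (set T)) : Prop :=
  [/\ U A, ~ U set0,
      (forall S S', U S -> U S' -> U (S `&` S')),
      (forall S S', U S -> S `&` A `<=` S' -> U S')
    & (forall S, U S \/ U (~` S))].

Definition SGpt := nat -> set (set (seq nat)).

(* S(G) = inverse limit of the beta H_n along the extended restrictions *)
Definition is_SG (a : SGpt) : Prop :=
  (forall n, ultra_on (Hn n) (a n)) /\
  (forall m n, m <= n -> forall S,
      a m S <-> a n [set x | S (restr m x)]).

Definition inG (g : nat -> nat) : Prop := bijective g.

Definition gres (g : nat -> nat) (m : nat) : seq nat := map g (iota 0 m).

(* right action: S in (a g)(m) iff {x in H_n : x o g|_m in S} in a(n), n large *)
Definition act (a : SGpt) (g : nat -> nat) : SGpt :=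
  fun m S => exists N, forall n, N <= n ->
    a n [set x | Hn n x /\ S (compH x (gres g m))].

Definition dotf (a : SGpt) (f : seq nat) : set (set (seq nat)) :=
  fun S => exists N, forall n, N <= n ->
    a n [set x | Hn n x /\ S (compH x f)].

Definition mulSG (a c : SGpt) : SGpt :=
  fun m S => c m [set f | Hn m f /\ dotf a f S].

Definition idempotentSG (a : SGpt) : Prop :=
  forall m S, mulSG a a m S <-> a m S.

(* Topology of S(G): basic open sets {b | S in b(n)}.  A subset M of S(G)
   is closed iff every point of S(G) outside M has a basic neighbourhood
   disjoint from M. *)
Definition closedSG (M : set SGpt) : Prop :=
  forall a, is_SG a -> ~ M a ->
    exists n S, a n S /\ forall b, M b -> ~ b n S.

Definition G_invariant (M : set SGpt) : Prop :=
  forall a g, M a -> inG g -> M (act a g).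

Definition subflow (M : set SGpt) : Prop :=
  [/\ M `<=` is_SG, M !=set0, closedSG M & G_invariant M].

Definition minimal_subflow (M : set SGpt) : Prop :=
  subflow M /\ forall N, subflow N -> N `<=` M -> N = M.

Definition LO (R : nat -> nat -> Prop) : Prop :=
  [/\ (forall a, ~ R a a),
      (forall a b c, R a b -> R b c -> R a c)
    & (forall a b, a <> b -> R a b \/ R b a)].

(* <^alpha = < . alpha = lim_{g_i -> alpha} < . g_i, where
   a (< . g) b iff g a < g b.  Evaluated at the pair (a,b) this limit is
   determined by whether {x in H_n : x a < x b} belongs to alpha(n). *)
Definition order_act (R : nat -> nat -> Prop) (a : SGpt) : nat -> nat -> Prop :=
  fun i j => exists N, forall n, N <= n ->
    a n [set x | Hn n x /\ R (nth 0 x i) (nth 0 x j)].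

Definition FM2 (M : set SGpt) : set (set (seq nat)) :=
  [set T | forall b, M b -> b 2 T].

(* [omega]^2, encoding {a,b} as the pair (min, max) *)
Definition omega2 : set (nat * nat) := [set p | p.1 < p.2].

Definition phi (x : seq nat) : nat * nat :=
  (minn (nth 0 x 0) (nth 0 x 1), maxn (nth 0 x 0) (nth 0 x 1)).

Definition phiF (F : set (set (seq nat))) : set (set (nat * nat)) :=
  [set T | F (phi @^-1` T)].

Definition Aset (R0 R1 : nat -> nat -> Prop) : set (nat * nat) :=
  [set p | omega2 p /\ (R0 p.1 p.2 <-> R1 p.1 p.2)].

Definition AM (M : set SGpt) (R0 R1 : nat -> nat -> Prop) : Prop :=
  phiF (FM2 M) (Aset R0 R1).

From mathcomp Require Import all_boot.
From mathcomp Require Import boolp classical_sets filter.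
Set Implicit Arguments. Unset Strict Implicit. Unset Printing Implicit Defensive.
Local Open Scope classical_set_scope.

(* (1) => (2): an idempotent [a] of the minimal flow [M] is a left unit of [M],
   so every [b] in [M] satisfies [b = a b].  At level 2 this says that [b 2]
   contains [{y | y0 < y1}] iff it contains [{y | y0 <^a y1}], i.e. almost every
   pair is ordered alike by [<] and [<^a].
   (3) => (1): applying the hypothesis to [b = a g], where [g] maps 0, 1 to
   [i], [j], gives [(<^a)^a = <^a].  Hence both [a m] and [(a a) m] contain the
   set [P] of injections of [m] whose [<]-pattern is [<^a] restricted to [m].
   If they differed they would contain disjoint [S1, S2] included in [P].
   Colour each [m]-set [I] of [omega] by whether almost every [x] maps some
   enumeration of [I] into [S_k].  Ramsey's theorem gives an infinite set that
   is homogeneous for both colourings; it cannot have colour "yes" for both,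
   since an enumeration of [I] is determined by its pattern, and colour "no"
   for [S_k] yields a point of [M] avoiding [S_k] below a given level [K].  A
   compactness argument and minimality then make every point of [M], [a]
   included, avoid [S1] at every level or [S2] at every level, contradicting
   that [S1] belongs to [(a a) m] and [S2] to [a m]. *)

Lemma nth_compH x f i : i < size f -> nth 0 (compH x f) i = nth 0 x (nth 0 f i).
Proof. by move=> hi; rewrite /compH (nth_map 0). Qed.

Lemma size_compH x f : size (compH x f) = size f.
Proof. by rewrite size_map. Qed.

Lemma compHA x f h : all (fun i => i < size f) h ->
  compH (compH x f) h = compH x (compH f h).
Proof.
move=> /allP hh; rewrite /compH -map_comp; apply/eq_in_map => i /hh hi /=.
by rewrite (nth_map 0).
Qed.

Lemma compH_take N x f : all (fun i => i < N) f -> compH (take N x) f = compH x f.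
Proof.
by move=> /allP hf; rewrite /compH; apply/eq_in_map => i /hf hi; rewrite nth_take.
Qed.

Lemma uniq_compH x f : uniq x -> uniq f -> all (fun i => i < size x) f ->
  uniq (compH x f).
Proof.
move=> ux uf /allP hf; rewrite /compH map_inj_in_uniq // => i j /hf hi /hf hj.
by move/eqP; rewrite nth_uniq // => /eqP.
Qed.

Lemma compH_iota x : compH x (iota 0 (size x)) = x.
Proof. by rewrite /compH map_nth_iota0 // take_size. Qed.

Definition bound (s : seq nat) : nat := (\max_(i <- s) i).+1.

Lemma bound_gt s i : i \in s -> i < bound s.
Proof. by move=> si; rewrite ltnS (leq_bigmax_seq (F := id) _ si). Qed.

Lemma all_bound s N : bound s <= N -> all (fun i => i < N) s.
Proof. by move=> h; apply/allP => i /bound_gt /leq_trans; apply. Qed.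

Lemma Hn_compH n x f : uniq x -> all (fun i => i < size x) f -> Hn n f ->
  Hn n (compH x f).
Proof. by move=> ux fx [uf sf]; rewrite /Hn/= size_compH uniq_compH. Qed.

Lemma Hn_iota m : Hn m (iota 0 m).
Proof. by rewrite /Hn/= iota_uniq size_iota. Qed.

Lemma Hn_gres g m : inG g -> Hn m (gres g m).
Proof.
by move=> /bij_inj ginj; rewrite /Hn/= map_inj_uniq ?iota_uniq // size_map size_iota.
Qed.

Lemma nth_uniq_neq x i j : uniq x -> i < size x -> j < size x -> i <> j ->
  nth 0 x i <> nth 0 x j.
Proof. by move=> ux hi hj hij /eqP; rewrite nth_uniq // => /eqP. Qed.

(* [g] lists [f], then the rest of [[0, K)] in increasing order, and fixes
   every [i >= K]. *)
Lemma extend_injection f : uniq f -> exists g, inG g /\ gres g (size f) = f.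
Proof.
move=> uf.
pose K := maxn (size f) (bound f).
pose l := f ++ [seq k <- iota 0 K | k \notin f].
have ul : uniq l.
  rewrite cat_uniq uf filter_uniq ?iota_uniq // andbT.
  by apply/hasPn => k; rewrite mem_filter => /andP [].
have l_iota : l =i iota 0 K.
  move=> k; rewrite mem_cat mem_filter mem_iota /=.
  have [kf|] := boolP (k \in f); last by rewrite orFb.
  by rewrite (leq_trans (bound_gt kf)) // leq_maxr.
have sl : size l = K.
  by rewrite -(size_iota 0 K); apply/perm_size/uniq_perm; rewrite ?iota_uniq.
have lK i : i < K -> nth 0 l i < K.
  move=> iK; have : nth 0 l i \in iota 0 K by rewrite -l_iota mem_nth ?sl.
  by rewrite mem_iota.
pose g i := if i < K then nth 0 l i else i.
exists g; split.
  exists (fun k => if k < K then index k l else k) => [i|k]; rewrite /g /=.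
    case iK: (i < K); last by rewrite iK.
    by rewrite (lK _ iK) index_uniq ?sl.
  case kK: (k < K); last by rewrite kK.
  have kl : k \in l by rewrite l_iota mem_iota.
  by rewrite -{1}sl index_mem kl nth_index.
rewrite -[RHS](take_size_cat [seq k <- iota 0 K | k \notin f] (erefl _)) -/l.
rewrite /gres -(map_nth_iota0 0) ?sl ?leq_maxl //.
apply/eq_in_map => i; rewrite mem_iota /= => hi.
by rewrite /g (leq_trans hi (leq_maxl _ _)).
Qed.

Section Ultrafilter.
Variables (T : Type) (A : set T) (U : set (set T)).
Hypothesis hU : ultra_on A U.

Lemma ultra_full : U A. Proof. by case: hU. Qed.
Lemma ultra_neq0 : ~ U set0. Proof. by case: hU. Qed.
Lemma ultraI S S' : U S -> U S' -> U (S `&` S').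
Proof. by case: hU => _ _ h _ _; apply: h. Qed.
Lemma ultraS S S' : U S -> S `&` A `<=` S' -> U S'.
Proof. by case: hU => _ _ _ h _; apply: h. Qed.
Lemma ultraC S : ~ U S -> U (~` S). Proof. by case: hU => _ _ _ _ /(_ S) []. Qed.

Lemma ultraW S S' : (forall x, A x -> S x -> S' x) -> U S -> U S'.
Proof. by move=> h hS; apply: ultraS hS _ => x [Sx Ax]; apply: h. Qed.

Lemma ultra_ext S S' : (forall x, A x -> (S x <-> S' x)) -> U S <-> U S'.
Proof. by move=> h; split; apply: ultraW => x /h []. Qed.

Lemma ultra_exists S : U S -> exists x, A x /\ S x.
Proof.
move=> hS; apply: contrapT => hn; apply: ultra_neq0; apply: ultraS hS _.
by move=> x [Sx Ax]; apply: hn; exists x.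
Qed.

Lemma ultra_compl_disj S : U S -> ~ U (~` S).
Proof. by move=> hS /(ultraI hS) /ultra_exists [x [_ []]]. Qed.

Lemma ultra_iff S S' : (U S <-> U S') <-> U [set x | S x <-> S' x].
Proof.
split=> [hSS'|hU' ]; last first.
  by split=> /(ultraI hU'); apply: ultraW => x _ [e /e].
have [hS|/ultraC hnS] := pselect (U S).
  by apply: ultraW (ultraI hS (hSS'.1 hS)) => x _ [].
have hnS' : U (~` S') by apply: ultraC => /hSS' /(ultra_compl_disj) /(_ hnS).
by apply: ultraW (ultraI hnS hnS') => x _ [].
Qed.
End Ultrafilter.

(** * Eventual properties of a point of S(G) *)

Definition almost (a : SGpt) (E : seq nat -> Prop) : Prop :=
  exists N, forall n, N <= n -> a n [set x | Hn n x /\ E x].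

Definition determined_by (N : nat) (E : seq nat -> Prop) : Prop :=
  forall x, N <= size x -> (E x <-> E (take N x)).

Lemma determined_compH N (S : set (seq nat)) f : all (fun i => i < N) f ->
  determined_by N (fun x => S (compH x f)).
Proof. by move=> hf x _; rewrite compH_take. Qed.

Lemma determined_nth N (R : nat -> nat -> Prop) i j : i < N -> j < N ->
  determined_by N (fun x => R (nth 0 x i) (nth 0 x j)).
Proof. by move=> hi hj x _; rewrite !nth_take. Qed.

Lemma dotfE a f S : dotf a f S = almost a (fun x => S (compH x f)).
Proof. by []. Qed.

Lemma actE a g m S : act a g m S = almost a (fun x => S (compH x (gres g m))).
Proof. by []. Qed.

Lemma order_actE R a i j :
  order_act R a i j = almost a (fun x => R (nth 0 x i) (nth 0 x j)).
Proof. by []. Qed.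

Section Almost.
Variable a : SGpt.
Hypothesis ha : is_SG a.

Lemma SG_ultra n : ultra_on (Hn n) (a n). Proof. by case: ha. Qed.
Lemma SG_restr m n S : m <= n -> a m S <-> a n [set x | S (restr m x)].
Proof. by case: ha => _ h /h. Qed.

Lemma SG_restrW K K' (F F' : set (seq nat)) : K <= K' ->
  (forall x, Hn K' x -> F' x -> F (take K x)) -> a K' F' -> a K F.
Proof.
move=> KK' h hF'; apply/(SG_restr F KK').
by apply: (ultraW (SG_ultra K')) hF' => x hx /(h x hx).
Qed.

Lemma almost_determined N E : determined_by N E -> (almost a E <-> a N E).
Proof.
move=> hE.
have key n : N <= n -> a n [set x | Hn n x /\ E x] <-> a N E.
  move=> hn; rewrite (SG_restr E hn); apply: (ultra_ext (SG_ultra n)) => x hx.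
  have sx : N <= size x by case: hx => _ ->.
  by rewrite /restr /mkset -(hE x sx); tauto.
split=> [[N' hN']|h]; last by exists N => n hn; apply/key.
by apply/(key (maxn N' N)); [exact: leq_maxr | apply: hN'; exact: leq_maxl].
Qed.

Lemma almost_mono N0 E E' :
  (forall x, N0 <= size x -> uniq x -> E x -> E' x) -> almost a E -> almost a E'.
Proof.
move=> h [N hN]; exists (maxn N N0) => n; rewrite geq_max => /andP [hNn hN0n].
apply: (ultraW (SG_ultra n)) (hN n hNn) => x [ux sx] [_ Ex]; split => //.
by apply: h; rewrite ?sx.
Qed.

Lemma almostW E E' : (forall x, uniq x -> E x -> E' x) -> almost a E -> almost a E'.
Proof. by move=> h; apply: (almost_mono (N0 := 0)) => x _; apply: h. Qed.

Lemma almost_ext N0 E E' : (forall x, N0 <= size x -> uniq x -> (E x <-> E' x)) ->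
  (almost a E <-> almost a E').
Proof. by move=> h; split; apply: (almost_mono (N0 := N0)) => x sx ux; rewrite h. Qed.

Lemma almost_and E E' : almost a E -> almost a E' -> almost a (fun x => E x /\ E' x).
Proof.
move=> [N hN] [N' hN']; exists (maxn N N') => n; rewrite geq_max => /andP [h h'].
apply: (ultraW (SG_ultra n)) (ultraI (SG_ultra n) (hN n h) (hN' n h')).
by move=> x _ [[? ?] [_ ?]].
Qed.

Lemma almost_true : almost a (fun _ => True).
Proof. by exists 0 => n _; apply: (ultraW (SG_ultra n)) (ultra_full (SG_ultra n)). Qed.

Lemma almost_all (I : eqType) (L : seq I) (E : I -> seq nat -> Prop) :
  (forall i, i \in L -> almost a (E i)) ->
  almost a (fun x => forall i, i \in L -> E i x).
Proof.
elim: L => [|i L IH] h; first by apply: almostW almost_true.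
have hL j : j \in L -> almost a (E j) by move=> jL; apply: h; rewrite inE jL orbT.
have := almost_and (h i (mem_head _ _)) (IH hL).
by apply: almostW => x _ [h1 h2] j; rewrite inE => /predU1P [->|/h2].
Qed.

Lemma almost_all2 n (E : nat -> nat -> seq nat -> Prop) :
  (forall i j, i < n -> j < n -> almost a (E i j)) ->
  almost a (fun x => forall i j, i < n -> j < n -> E i j x).
Proof.
pose L := [seq (i, j) | i <- iota 0 n, j <- iota 0 n].
move=> h; have hL ij : ij \in L -> almost a (E ij.1 ij.2).
  by move=> /allpairsP [[i j] [/=]]; rewrite !mem_iota => hi hj ->; apply: h.
apply: almostW (almost_all hL) => x _ hx i j hi hj.
by apply: (hx (i, j)); apply: allpairs_f; rewrite mem_iota.
Qed.

Lemma almost_exists E : almost a E ->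
  forall N, exists x, [/\ uniq x, N <= size x & E x].
Proof.
move=> [N0 h] N; have := h (maxn N0 N) (leq_maxl _ _).
move=> /(ultra_exists (SG_ultra _)) [x [[ux sx] [_ Ex]]].
by exists x; rewrite sx leq_maxr.
Qed.

Lemma almost_false : ~ almost a (fun _ => False).
Proof. by move=> /almost_exists /(_ 0) [x []]. Qed.

Lemma almost_not N E : determined_by N E -> ~ almost a E -> almost a (fun x => ~ E x).
Proof.
move=> hE; have hnE : determined_by N (fun x => ~ E x) by move=> x /hE ->.
by rewrite (almost_determined hE) (almost_determined hnE) => /(ultraC (SG_ultra N)).
Qed.

Lemma almost_iff E E' :
  almost a (fun x => E x <-> E' x) -> (almost a E <-> almost a E').
Proof. by move=> h; split=> /(almost_and h); apply: almostW => x _ [e /e]. Qed.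

Lemma almost_decide N E : determined_by N E -> almost a (fun x => E x <-> almost a E).
Proof.
move=> hE; have [hE'|nE] := pselect (almost a E).
  by have := hE'; apply: almostW => x _ Ex; split=> _.
apply: almostW (almost_not hE nE) => x _ nEx; split=> // /nE.
Qed.

Lemma dotf_iota m S : dotf a (iota 0 m) S <-> a m S.
Proof.
have hiota : all (fun i => i < m) (iota 0 m) by apply/allP => i; rewrite mem_iota.
rewrite dotfE (almost_determined (determined_compH S hiota)).
by apply: (ultra_ext (SG_ultra m)) => x [_ sx]; rewrite -sx compH_iota.
Qed.

Lemma almost_dep N0 (P : nat -> seq nat -> Prop) (Q : seq nat -> Prop) :
  (forall n f, N0 <= n -> Hn n f -> (P n f <-> Q f)) ->
  (exists N, forall n, N <= n -> a n [set f | Hn n f /\ P n f]) <-> almost a Q.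
Proof.
move=> h; split=> -[N hN]; exists (maxn N N0) => n; rewrite geq_max => /andP [hn h0];
  apply: (ultraW (SG_ultra n)) (hN n hn) => f hf [_ Pf]; split => //.
  by rewrite -(h n f h0 hf).
by rewrite (h n f h0 hf).
Qed.
End Almost.

Lemma LO_swap R u v : LO R -> u <> v -> (R v u <-> ~ R u v).
Proof.
move=> [irr tr tot] uv; split=> [hvu huv|]; first exact: irr (tr _ _ _ huv hvu).
by case: (tot _ _ uv).
Qed.

Lemma LO_order_act R a : is_SG a -> LO R -> LO (order_act R a).
Proof.
move=> ha hR; have [irr tr _] := hR; split.
- move=> i hii; apply: (almost_false ha); apply: (almostW ha) hii => x _.
  exact: irr.
- move=> i j k; rewrite !order_actE => hij /(almost_and ha hij).
  by apply: (almostW ha) => x _ [] /tr; apply.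
move=> i j ij; rewrite !order_actE.
have hdet := determined_nth (N := (maxn i j).+1) R (leq_maxl i j) (leq_maxr i j).
have [|/(almost_not ha hdet) hji] :=
  pselect (almost a (fun x => R (nth 0 x i) (nth 0 x j))); first by left.
right; apply: (almost_mono ha (N0 := (maxn i j).+1)) hji => x sx ux.
have ne : nth 0 x i <> nth 0 x j.
  by apply: nth_uniq_neq; rewrite // (leq_trans _ sx) // ltnS ?leq_maxl ?leq_maxr.
by move/(LO_swap hR ne).2.
Qed.

Lemma Aset_phi R R' y : LO R -> LO R' -> Hn 2 y ->
  ((phi @^-1` Aset R R') y <->
   (R (nth 0 y 0) (nth 0 y 1) <-> R' (nth 0 y 0) (nth 0 y 1))).
Proof.
move=> hR hR' [uy sy].
have ne : nth 0 y 0 <> nth 0 y 1 by apply: nth_uniq_neq; rewrite ?sy.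
rewrite /preimage /Aset /phi /omega2 /=.
move: ne; set u := nth 0 y 0; set v := nth 0 y 1 => ne.
have [uv|vu|//] := ltngtP u v; first by split; [case|split].
rewrite /mkset (LO_swap hR ne) (LO_swap hR' ne).
by have [] := pselect (R u v); have [] := pselect (R' u v); tauto.
Qed.

Lemma act_ext b b' g m S :
  (forall n S', b n S' <-> b' n S') -> (act b g m S <-> act b' g m S).
Proof. by move=> e; split=> -[N hN]; exists N => n /hN /e. Qed.

Lemma mulSG_act al b g m S : is_SG al -> is_SG b -> inG g ->
  mulSG al (act b g) m S <-> act (mulSG al b) g m S.
Proof.
move=> hal hb hg; set gm := gres g m; have Hgm : Hn m gm := Hn_gres m hg.
transitivity (almost b (fun f => dotf al (compH f gm) S)).
  apply: (almost_ext hb (N0 := bound gm)) => x sx ux; rewrite /mkset.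
  by split=> [[]|] // h; split => //; apply: Hn_compH; rewrite ?all_bound.
symmetry; rewrite /act /mulSG -/gm.
apply: (almost_dep (N0 := bound gm)
  (P := fun n f => dotf al f [set x | Hn n x /\ S (compH x gm)]) hb) => n f gn [uf sf].
apply: (almost_ext hal (N0 := bound f)) => z sz uz; rewrite /mkset.
rewrite compHA ?sf ?all_bound //.
by split=> [[]|] // h; split => //; apply: Hn_compH; rewrite ?all_bound.
Qed.

Lemma mulSGI a b m S S' : is_SG a -> is_SG b ->
  mulSG a b m S -> mulSG a b m S' -> mulSG a b m (S `&` S').
Proof.
move=> ha hb h h'; apply: (ultraW (SG_ultra hb m)) (ultraI (SG_ultra hb m) h h').
by move=> f _ [[Hf d] [_ d']]; split=> //; apply: (almostW ha) (almost_and ha d d').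
Qed.

Lemma mulSGC a b m S : is_SG a -> is_SG b ->
  ~ mulSG a b m S -> mulSG a b m (~` S).
Proof.
move=> ha hb /(ultraC (SG_ultra hb m)); apply: (ultraW (SG_ultra hb m)) => f hf nd.
split=> //; apply: (almost_not ha (determined_compH S (all_bound (leqnn (bound f))))).
by move=> d; apply: nd.
Qed.

(** * Minimal subflows *)

Section MinimalSubflow.
Variable M : set SGpt.
Hypothesis hM : minimal_subflow M.

Lemma minimal_SG b : M b -> is_SG b.
Proof. by case: hM => -[h _ _ _] _ /h. Qed.

Lemma minimal_invariant : G_invariant M.
Proof. by case: hM => -[]. Qed.

(* The conditions [b (n i) (S i)] cut out a closed subset of S(G). *)
Lemma minimal_basic (I : Type) (n : I -> nat) (S : I -> set (seq nat)) :
  (exists2 b, M b & forall i, b (n i) (S i)) ->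
  (forall b g, M b -> inG g ->
     (forall i, b (n i) (S i)) -> forall i, act b g (n i) (S i)) ->
  forall b, M b -> forall i, b (n i) (S i).
Proof.
move=> [b0 Mb0 hb0] hinv.
suff NM : [set b | M b /\ forall i, b (n i) (S i)] = M by move=> b; rewrite -NM => -[].
have [[_ _ closedM _] minM] := hM.
apply: minM => [|b []//]; split.
- by move=> b [/minimal_SG].
- by exists b0.
- move=> b hb nNb; have [Mb|nMb] := pselect (M b); last first.
    have [k [S' [bS hS]]] := closedM b hb nMb.
    by exists k, S'; split => // c [Mc _]; apply: hS.
  have [i nbi] : exists i, ~ b (n i) (S i) by apply/existsNP => h; apply: nNb.
  exists (n i), (~` S i); split; first exact: (ultraC (SG_ultra hb _)).
  by move=> c [Mc hc] /(ultra_compl_disj (SG_ultra (minimal_SG Mc) _) (hc i)).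
- by move=> b g [Mb hb] hg; split; [exact: minimal_invariant | exact: hinv].
Qed.

(* [c] is the limit of the [d K] along a nonprincipal ultrafilter on [nat]. *)
Lemma minimal_cluster (d : nat -> SGpt) : (forall K, M (d K)) ->
  exists2 c, M c & forall n S, (exists K0, forall K, K0 <= K -> d K n S) -> c n S.
Proof.
move=> Md; have hd K := minimal_SG (Md K).
have [U [UU cofU]] := ultraFilterLemma (T := nat) eventually_filter.
have UP : ProperFilter U by case: UU.
have Uev A : (exists K0, forall K, K0 <= K -> A K) -> U A.
  by move=> [K0 h]; apply: cofU; exists K0.
have Uex A : U A -> exists K, A K by apply: filter_ex.
pose c : SGpt := fun n S => U [set K | d K n S].
have hc : is_SG c.
  split=> [n|m n mn S]; last first.
    by rewrite /c; split; apply: filterS => K; rewrite /= (SG_restr (hd K) S mn).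
  rewrite /c; split.
  - by apply: Uev; exists 0 => K _; apply: ultra_full (SG_ultra (hd K) n).
  - by move=> /Uex [K]; apply: (ultra_neq0 (SG_ultra (hd K) n)).
  - move=> S S' h h'; apply: filterS (filterI h h') => K [hS hS'].
    exact/(ultraI (SG_ultra (hd K) n) hS hS').
  - move=> S S' h hs; apply: filterS h => K hK.
    exact/(ultraS (SG_ultra (hd K) n) hK hs).
  - move=> S; have [|h] := in_ultra_setVsetC [set K | d K n S] UU; [by left | right].
    by apply: filterS h => K /(ultraC (SG_ultra (hd K) n)).
exists c => [|n S /Uev //].
apply: contrapT => nMc; have [[_ _ closedM _] _] := hM.
have [n [S [cS hS]]] := closedM c hc nMc.
by have [K hK] := Uex _ cS; apply: (hS (d K)).
Qed.
End MinimalSubflow.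

Lemma idempotent_left_unit M al : minimal_subflow M -> M al -> idempotentSG al ->
  forall b, M b -> forall m S, mulSG al b m S <-> b m S.
Proof.
move=> hM Mal ida.
(* [b m (D (m, S))] says that [mulSG al b] and [b] agree on [S] at level [m]. *)
pose D (i : nat * set (seq nat)) := [set f | (Hn i.1 f /\ dotf al f i.2) <-> i.2 f].
suff hD : forall b, M b -> forall i, b i.1 (D i).
  move=> b Mb m S.
  exact/(ultra_iff (SG_ultra (minimal_SG hM Mb) m))/(hD b Mb (m, S)).
have hal := minimal_SG hM Mal.
apply: (minimal_basic hM) => [|b g Mb hg hb i].
  by exists al => // i; apply/(ultra_iff (SG_ultra hal _)); apply: ida.
have hb' m S : mulSG al b m S <-> b m S.
  exact/(ultra_iff (SG_ultra (minimal_SG hM Mb) m))/(hb (m, S)).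
apply/(ultra_iff (SG_ultra (minimal_SG hM (minimal_invariant hM Mb hg)) _)).
exact: iff_trans (mulSG_act _ _ hal (minimal_SG hM Mb) hg) (act_ext _ _ _ hb').
Qed.

Lemma AM_of_idempotent M al R : minimal_subflow M -> M al -> idempotentSG al -> LO R ->
  AM M R (order_act R al).
Proof.
move=> hM Mal ida hR b Mb; have hb := minimal_SG hM Mb; have hal := minimal_SG hM Mal.
pose Q := [set y : seq nat | R (nth 0 y 0) (nth 0 y 1)].
pose Q' := [set y : seq nat | order_act R al (nth 0 y 0) (nth 0 y 1)].
have QQ' : b 2 Q <-> b 2 Q'.
  rewrite -(idempotent_left_unit hM Mal ida Mb); apply: (ultra_ext (SG_ultra hb 2)).
  move=> y [uy sy]; have eQ : dotf al y Q <-> Q' y.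
    rewrite dotfE /Q' /mkset order_actE; apply: (almost_ext hal (N0 := 0)) => x _ _.
    by rewrite /Q /mkset !nth_compH ?sy.
  by rewrite /mkset eQ; split=> [[]|].
move/(ultra_iff (SG_ultra hb 2)): QQ'; apply: (ultraW (SG_ultra hb 2)) => y hy.
by move=> hQ; apply/(Aset_phi hR (LO_order_act hal hR) hy).
Qed.

Lemma order_act_fix_of_AM M al R : minimal_subflow M -> M al -> LO R ->
  AM M R (order_act R al) ->
  forall i j, order_act (order_act R al) al i j <-> order_act R al i j.
Proof.
move=> hM Mal hR hA i j; have hal := minimal_SG hM Mal.
have hR' := LO_order_act hal hR; have hR'' := LO_order_act hal hR'.
have [<-|ij] := eqVneq i j.
  by have [irr _ _] := hR'; have [irr' _ _] := hR''; split=> [/irr'|/irr].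
have /extend_injection [g [hg /= eg]] : uniq [:: i; j] by rewrite /= inE andbT.
have := hA _ (minimal_invariant hM Mal hg); rewrite actE eg => hE.
rewrite !order_actE; symmetry; apply: (almost_iff hal).
apply: (almost_mono hal (N0 := bound [:: i; j])) hE => x sx ux.
have H2 : Hn 2 [:: i; j] by rewrite /Hn/= inE andbT.
by move/(Aset_phi hR hR' (Hn_compH ux (all_bound sx) H2)); rewrite !nth_compH.
Qed.

(** * Order patterns *)

Definition pattern (R p : nat -> nat -> Prop) (m : nat) : set (seq nat) :=
  [set x | forall i j, i < m -> j < m -> (R (nth 0 x i) (nth 0 x j) <-> p i j)].

Lemma almost_pattern R a f : is_SG a ->
  almost a (fun z => pattern R (fun i j => order_act R a (nth 0 f i) (nth 0 f j))
                       (size f) (compH z f)).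
Proof.
move=> ha; apply: (almost_all2 ha) => i j hi hj.
have hdet := determined_nth (N := bound f) R
  (bound_gt (mem_nth 0 hi)) (bound_gt (mem_nth 0 hj)).
by apply: (almostW ha) (almost_decide ha hdet) => z _; rewrite !nth_compH.
Qed.

Lemma pattern_in R a m : is_SG a -> a m (pattern R (order_act R a) m).
Proof.
move=> ha; rewrite -(dotf_iota ha) dotfE.
apply: (almostW ha) (almost_pattern R (iota 0 m) ha) => z _.
by rewrite size_iota => h i j hi hj; rewrite h // !nth_iota.
Qed.

Lemma pattern_in_mul R a m : is_SG a ->
  (forall i j, order_act (order_act R a) a i j <-> order_act R a i j) ->
  mulSG a a m (pattern R (order_act R a) m).
Proof.
move=> ha fix_a; apply: (ultraW (SG_ultra ha m)) (pattern_in (order_act R a) m ha).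
move=> f [uf sf] hf; split=> //; rewrite dotfE.
apply: (almostW ha) (almost_pattern R f ha) => z _; rewrite sf => h i j hi hj.
by rewrite h // hf // fix_a.
Qed.

Lemma count_ltn_sub (T : eqType) (P Q : pred T) (s : seq T) y :
  subpred P Q -> y \in s -> Q y -> ~~ P y -> count P s < count Q s.
Proof.
move=> PQ; elim: s => // z s IH; rewrite inE => /predU1P [<-|ys] Qy nPy /=.
  by rewrite (negbTE nPy) Qy add0n add1n ltnS sub_count.
rewrite -addnS leq_add ?IH //.
by case: (P z) (PQ z) => // /(_ isT) ->.
Qed.

(* An entry is determined by its rank, the number of entries [R]-below it. *)
Lemma perm_pattern_eq R p (s t : seq nat) : LO R -> uniq s -> perm_eq s t ->
  pattern R p (size s) s -> pattern R p (size s) t -> s = t.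
Proof.
move=> hR us st hs ht; have [irr tr tot] := hR.
have sz : size t = size s by rewrite (perm_size st).
pose rank w := count (fun u => `[< R u w >]) s.
have rank_nth i : i < size s -> rank (nth 0 s i) = rank (nth 0 t i).
  move=> hi; have rank_p r : size r = size s -> pattern R p (size s) r ->
      count (fun u => `[< R u (nth 0 r i) >]) r =
      count (fun k => `[< p k i >]) (iota 0 (size s)).
    move=> sr hr; rewrite -[X in count _ X](mkseq_nth 0 r) /mkseq count_map sr.
    by apply: eq_in_count => k; rewrite mem_iota => hk; apply/asbool_equiv_eq/hr.
  by rewrite /rank [RHS](permP st) !rank_p.
have rank_lt u v : u \in s -> R u v -> rank u < rank v.
  move=> us' Ruv; apply: (count_ltn_sub (y := u)) => //.
  - by move=> w /asboolP Rwu; apply/asboolP; apply: tr Rwu Ruv.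
  - exact/asboolP.
  - by apply/asboolP/irr.
apply: (eq_from_nth (x0 := 0)); rewrite ?sz // => i hi.
have [//|ne] := pselect (nth 0 s i = nth 0 t i).
have si : nth 0 s i \in s by rewrite mem_nth.
have ti : nth 0 t i \in s by rewrite (perm_mem st) mem_nth ?sz.
by case: (tot _ _ ne) => [/(rank_lt _ _ si)|/(rank_lt _ _ ti)]; rewrite rank_nth // ltnn.
Qed.

(** * Ramsey's theorem *)

Definition unbounded (B : set nat) : Prop := forall n, exists2 b, B b & n <= b.

Definition homogeneous (m : nat) (c : seq nat -> bool) (B : set nat) (v : bool) : Prop :=
  forall I, sorted ltn I -> size I = m -> (forall i, i \in I -> B i) -> c I = v.

Lemma unbounded_gt A a : unbounded A -> unbounded [set x | A x /\ a < x].
Proof.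
move=> hA n; have [b Ab] := hA (maxn n a).+1; rewrite gtn_max => /andP [nb ab].
by exists b; [split | apply: ltnW].
Qed.

Lemma unbounded_enum B : unbounded B ->
  exists e : nat -> nat, (forall k, B (e k)) /\ (forall k, e k < e k.+1).
Proof.
move=> hB; have /choice [nxt hnxt] : forall n, exists b, B b /\ n < b.
  by move=> n; have [b] := hB n.+1; exists b.
exists (fun k => iter k.+1 nxt 0); split=> [k|k]; first by case: (hnxt (iter k nxt 0)).
by case: (hnxt (iter k.+1 nxt 0)).
Qed.

Lemma infinitely_often (col : nat -> bool) :
  exists v, forall N, exists2 k, N <= k & col k = v.
Proof.
have [ht|hf] := pselect (forall N, exists2 k, N <= k & col k = true); first by exists true.
move/existsNP: hf => [N0 hN0]; exists false => N.
exists (maxn N N0); first exact: leq_maxl.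
by apply/negbTE/negP => ck; apply: hN0; exists (maxn N N0); rewrite ?leq_maxr.
Qed.

Section RamseyStep.
Variables (m : nat) (c : seq nat -> bool).
Hypothesis IH : forall c' A, unbounded A ->
  exists B v, [/\ B `<=` A, unbounded B & homogeneous m c' B v].

Lemma ramsey_head A : unbounded A -> exists a B v,
  [/\ A a, B `<=` [set x | A x /\ a < x], unbounded B
    & homogeneous m (fun I => c (a :: I)) B v].
Proof.
move=> hA; have [a Aa _] := hA 0.
have [B [v [BA hB hom]]] := IH (fun I => c (a :: I)) (unbounded_gt a hA).
by exists a, B, v.
Qed.

Lemma ramsey_chain A : unbounded A -> exists (a : nat -> nat) (col : nat -> bool),
  [/\ forall k, A (a k), forall k, a k < a k.+1
    & forall k I, sorted ltn I -> size I = m ->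
        (forall i, i \in I -> exists2 k', k < k' & i = a k') -> c (a k :: I) = col k].
Proof.
move=> hA.
have step A' : exists t : nat * (set nat * bool), unbounded A' ->
    [/\ A' t.1, t.2.1 `<=` [set x | A' x /\ t.1 < x], unbounded t.2.1
      & homogeneous m (fun I => c (t.1 :: I)) t.2.1 t.2.2].
  have [hA'|nA'] := pselect (unbounded A'); last by exists (0, (set0, true)).
  by have [a [B [v h]]] := ramsey_head hA'; exists (a, (B, v)).
have [nx hnx] := choice step.
pose As := fix As k := if k is k'.+1 then (nx (As k')).2.1 else A.
have Ainf k : unbounded (As k).
  by elim: k => // k IHk; have [] := hnx _ IHk.
pose a k := (nx (As k)).1; pose col k := (nx (As k)).2.2.
have Aa k : As k (a k) by case: (hnx _ (Ainf k)).
have Asub k : As k.+1 `<=` [set x | As k x /\ a k < x] by case: (hnx _ (Ainf k)).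
have hom k : homogeneous m (fun I => c (a k :: I)) (As k.+1) (col k).
  by case: (hnx _ (Ainf k)).
have Adec k k' : k < k' -> As k' `<=` As k.+1.
  elim: k' => // k' IHk'; rewrite ltnS leq_eqVlt => /predU1P [<- //|/IHk' sub].
  by move=> x /Asub [/sub].
exists a, col; split.
- move=> k; have : As k `<=` A by elim: k => // k IHk x /Asub [/IHk].
  exact.
- by move=> k; case: (Asub k _ (Aa k.+1)).
move=> k I sI sz hI; apply: hom => // i /hI [k' kk' ->].
exact: Adec kk' _ (Aa k').
Qed.
End RamseyStep.

Lemma ramsey m c A : unbounded A ->
  exists B v, [/\ B `<=` A, unbounded B & homogeneous m c B v].
Proof.
elim: m c A => [|m IH] c A hA; first by exists A, (c [::]); split => // -[].
have [a [col [Aa ainc hcol]]] := ramsey_chain c IH hA.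
have amono := leq_mono (homo_ltn ltn_trans ainc).
have [v hv] := infinitely_often col.
exists [set x | exists2 k, x = a k & col k = v], v; split.
- by move=> x [k -> _].
- move=> n; have [k nk ck] := hv n; exists (a k); first by exists k.
  apply: leq_trans nk _; elim: k {ck} => // k IHk; exact: leq_ltn_trans IHk (ainc k).
move=> [|i0 I] //= sI [sz] hB; have [k ek ck] := hB i0 (mem_head _ _).
rewrite ek -ck in sI *; apply: hcol => //; first exact: path_sorted sI.
move=> i iI; have [k' ek' _] := hB i (mem_behead (s := i0 :: I) iI); exists k' => //.
have /allP /(_ i iI) := order_path_min ltn_trans sI.
by rewrite ek' ltnNge amono -ltnNge.
Qed.

Lemma ramsey2 m c1 c2 : exists2 B, unbounded B &
  exists v1 v2, homogeneous m c1 B v1 /\ homogeneous m c2 B v2.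
Proof.
have hT : unbounded setT by move=> n; exists n.
have [B1 [v1 [_ hB1 hom1]]] := ramsey m c1 hT.
have [B2 [v2 [B21 hB2 hom2]]] := ramsey m c2 hB1.
exists B2 => //; exists v1, v2; split => // J sJ sz hJ.
by apply: hom1 => // i /hJ /B21.
Qed.

(** * Avoiding a set of injections *)

Definition avoid (m : nat) (S : set (seq nat)) (K : nat) : set (seq nat) :=
  [set x | forall f, Hn m f -> all (fun i => i < K) f -> ~ S (compH x f)].

Lemma avoid_take m S K K' x : K <= K' -> avoid m S K' x -> avoid m S K (take K x).
Proof.
move=> KK' h f hf af; rewrite compH_take //; apply: h => //.
by apply/allP => i /(allP af) /leq_trans; apply.
Qed.

Section Avoid.
Variables (m : nat) (S : set (seq nat)) (d : SGpt).
Hypothesis hd : is_SG d.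

Lemma avoid_not_dotf f : (forall K, d K (avoid m S K)) -> Hn m f -> ~ dotf d f S.
Proof.
move=> hav hf; rewrite dotfE => hS.
have hav' : almost d (fun x => avoid m S (size x) x).
  by exists 0 => n _; apply: (ultraW (SG_ultra hd n)) (hav n) => x [ux <-].
have [x [_ sx [Sx avx]]] := almost_exists hd (almost_and hd hS hav') (bound f).
exact: avx f hf (all_bound sx) Sx.
Qed.

Lemma avoid_not_in : (forall K, d K (avoid m S K)) -> ~ d m S.
Proof. by move=> hav; rewrite -(dotf_iota hd); apply: avoid_not_dotf (Hn_iota m). Qed.

Lemma avoid_not_mul b : is_SG b -> (forall K, d K (avoid m S K)) -> ~ mulSG d b m S.
Proof.
move=> hb hav /(ultra_exists (SG_ultra hb m)) [f [hf [_ df]]].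
exact: avoid_not_dotf hav hf df.
Qed.
End Avoid.

Lemma avoid_everywhere M m S : minimal_subflow M ->
  (exists2 d, M d & forall K, d K (avoid m S K)) ->
  forall d, M d -> forall K, d K (avoid m S K).
Proof.
move=> hM h0; apply: (minimal_basic hM (n := id)) => // d g Md hg hd K.
rewrite actE; set gK := gres g K; have [_ sgK] : Hn K gK := Hn_gres K hg.
exists (bound gK) => n hn; apply: (ultraW (SG_ultra (minimal_SG hM Md) n)) (hd n).
move=> x [ux sx] hx; split=> // f hf af; rewrite compHA ?sgK //; apply: hx.
- by apply: Hn_compH; rewrite ?sgK ?(Hn_gres K hg).1.
- apply/allP => _ /mapP [k kf ->]; apply: leq_trans hn; apply: bound_gt.
  by rewrite mem_nth ?sgK ?(allP af).
Qed.

Lemma avoid_dichotomy m S1 S2 c : is_SG c ->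
  (forall K, c K (avoid m S1 K `|` avoid m S2 K)) ->
  (forall K, c K (avoid m S1 K)) \/ (forall K, c K (avoid m S2 K)).
Proof.
move=> hc h12; have [|/existsNP [K0 nK0]] := pselect (forall K, c K (avoid m S1 K)).
  by left.
right=> K; set K' := maxn K K0.
have n1 : ~ c K' (avoid m S1 K').
  move=> h1; apply: nK0; apply: (SG_restrW hc (leq_maxr K K0)) h1 => x _.
  exact/avoid_take/leq_maxr.
apply: (SG_restrW hc (leq_maxl K K0) (F' := avoid m S2 K')) => [x _|].
  exact/avoid_take/leq_maxl.
have := ultraI (SG_ultra hc K') (h12 K') (ultraC (SG_ultra hc K') n1).
by apply: (ultraW (SG_ultra hc K')) => x _ [[]].
Qed.

Fixpoint bounded_seqs (m K : nat) : seq (seq nat) :=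
  if m is m'.+1 then [seq i :: t | i <- iota 0 K, t <- bounded_seqs m' K] else [:: [::]].

Lemma bounded_seqsP m K f :
  size f = m -> all (fun i => i < K) f -> f \in bounded_seqs m K.
Proof.
elim: m f => [|m IH] [|i f] //= [sf] /andP [iK fK].
by apply: allpairs_f; [rewrite mem_iota | apply: IH].
Qed.

Section Separation.
Variables (R p : nat -> nat -> Prop) (m : nat) (S1 S2 : set (seq nat)) (d : SGpt).
Hypotheses (hR : LO R) (hd : is_SG d).
Hypotheses (S1p : S1 `<=` pattern R p m) (S2p : S2 `<=` pattern R p m).
Hypothesis S12 : forall x, S1 x -> S2 x -> False.

Definition hits (S : set (seq nat)) (I : seq nat) (x : seq nat) : Prop :=
  exists2 J, Hn m J /\ {subset J <= I} & S (compH x J).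

Definition color (S : set (seq nat)) (I : seq nat) : bool := `[< almost d (hits S I) >].

Lemma determined_hits S I : determined_by (bound I) (hits S I).
Proof.
move=> x _; have sub J : {subset J <= I} -> all (fun i => i < bound I) J.
  by move=> JI; apply/allP => i /JI /bound_gt.
by split=> -[J [HJ JI] SJ]; exists J => //; move: SJ; rewrite compH_take // sub.
Qed.

Lemma almost_avoid S B h : homogeneous m (color S) B false -> uniq h ->
  (forall i, i \in h -> B i) -> almost d (fun x => avoid m S (size h) (compH x h)).
Proof.
move=> hom uh hB.
have : almost d (fun x => forall f, f \in bounded_seqs m (size h) -> Hn m f ->
    all (fun i => i < size h) f -> ~ S (compH x (compH h f))).
  apply: (almost_all hd) => f _.
  have [[hf af]|nf] := pselect (Hn m f /\ all (fun i => i < size h) f); last first.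
    by apply: (almostW hd) (almost_true hd) => x _ _ hf af; case: nf.
  set J := compH h f; have HJ : Hn m J by apply: Hn_compH.
  have nI : ~ almost d (hits S (sort leq J)).
    move=> /asboolP hit; suff: color S (sort leq J) = false by rewrite /color hit.
    apply: hom; rewrite ?size_sort ?HJ.2 //.
      by rewrite ltn_sorted_uniq_leq sort_uniq HJ.1 (sort_sorted leq_total).
    by move=> i; rewrite mem_sort => /mapP [k kf ->]; apply/hB/mem_nth/(allP af).
  have := almost_not hd (determined_hits S (I := sort leq J)) nI.
  apply: (almostW hd) => x _ nhit _ _ SJ.
  by apply: nhit; exists J => //; split=> // i; rewrite mem_sort.
apply: (almostW hd) => x _ H f hf af; rewrite compHA //.
by apply: H => //; apply: bounded_seqsP; rewrite ?hf.2.
Qed.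

Lemma colors_not_both B : unbounded B ->
  homogeneous m (color S1) B true -> homogeneous m (color S2) B true -> False.
Proof.
move=> hB hom1 hom2; have [e [eB einc]] := unbounded_enum hB.
pose I0 := map e (iota 0 m).
have sI0 : sorted ltn I0.
  rewrite sorted_map; apply: sub_sorted (iota_ltn_sorted 0 m) => i j.
  exact/(homo_ltn ltn_trans einc).
have hI0 S : homogeneous m (color S) B true -> almost d (hits S I0).
  move=> hom; apply/asboolP; apply: hom => //; first by rewrite size_map size_iota.
  by move=> i /mapP [k _ ->].
have [x [ux sx [[J1 HJ1 SJ1] [J2 HJ2 SJ2]]]] :=
  almost_exists hd (almost_and hd (hI0 _ hom1) (hI0 _ hom2)) (bound I0).
have eqI0 J : Hn m J /\ {subset J <= I0} -> J =i I0.
  move=> [[uJ sJ] JI0]; apply: (uniq_min_size uJ JI0 _).2.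
  by rewrite sJ size_map size_iota.
have pJ : perm_eq J1 J2.
  by apply: uniq_perm HJ1.1.1 HJ2.1.1 _ => i; rewrite (eqI0 _ HJ1) (eqI0 _ HJ2).
have xJ1 : all (fun i => i < size x) J1.
  by apply/allP => i; rewrite (eqI0 _ HJ1) => /bound_gt /leq_trans; apply.
have sxJ1 : size (compH x J1) = m by rewrite size_compH HJ1.1.2.
have e12 : compH x J1 = compH x J2.
  have uxJ1 := uniq_compH ux HJ1.1.1 xJ1.
  apply: (perm_pattern_eq hR uxJ1 (perm_map _ pJ)); rewrite sxJ1.
  - exact: S1p.
  - exact: S2p.
by apply: (S12 SJ1); rewrite e12.
Qed.

Lemma avoid_either_act K :
  exists g, inG g /\ act d g K (avoid m S1 K `|` avoid m S2 K).
Proof.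
have [B hB [v1 [v2 [hom1 hom2]]]] := ramsey2 m (color S1) (color S2).
have [e [eB einc]] := unbounded_enum hB.
pose h := map e (iota 0 K); have sh : size h = K by rewrite size_map size_iota.
have uh : uniq h.
  rewrite map_inj_uniq ?iota_uniq //.
  exact/incn_inj/leq_mono/(homo_ltn ltn_trans einc).
have hB' i : i \in h -> B i by move=> /mapP [k _ ->].
have [g [hg eg]] := extend_injection uh; rewrite sh in eg.
exists g; split=> //; rewrite actE eg.
case: v1 hom1 => hom1; last first.
  by apply: (almostW hd) (almost_avoid hom1 uh hB') => x _; rewrite sh; left.
case: v2 hom2 => hom2; last first.
  by apply: (almostW hd) (almost_avoid hom2 uh hB') => x _; rewrite sh; right.
by case: (colors_not_both hB hom1 hom2).
Qed.
End Separation.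

Lemma avoid_one_everywhere M R p m S1 S2 : minimal_subflow M -> LO R ->
  S1 `<=` pattern R p m -> S2 `<=` pattern R p m ->
  (forall x, S1 x -> S2 x -> False) ->
  (forall d, M d -> forall K, d K (avoid m S1 K)) \/
  (forall d, M d -> forall K, d K (avoid m S2 K)).
Proof.
move=> hM hR S1p S2p S12; have [[_ [d0 Md0] _ _] _] := hM.
have hd0 := minimal_SG hM Md0.
have /choice [g hg] := avoid_either_act hR hd0 S1p S2p S12.
have [c Mc hc] := minimal_cluster hM (fun K => minimal_invariant hM Md0 (hg K).1).
have hc12 K : c K (avoid m S1 K `|` avoid m S2 K).
  apply: hc; exists K => K' KK'.
  apply: (SG_restrW (minimal_SG hM (minimal_invariant hM Md0 (hg K').1)) KK') (hg K').2.
  by move=> x _ [/(avoid_take KK')|/(avoid_take KK')]; [left|right].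
by case: (avoid_dichotomy (minimal_SG hM Mc) hc12) => h; [left|right];
  apply: (avoid_everywhere hM); exists c.
Qed.

Lemma idempotent_of_order_act_fix M a R : minimal_subflow M -> M a -> LO R ->
  (forall i j, order_act (order_act R a) a i j <-> order_act R a i j) ->
  idempotentSG a.
Proof.
move=> hM Ma hR fix_a; have ha := minimal_SG hM Ma.
suff no_sep m T T' : mulSG a a m T -> a m T' -> (forall x, T x -> T' x -> False) -> False.
  move=> m S; split=> h; apply: contrapT => nS.
  - exact: no_sep h (ultraC (SG_ultra ha m) nS) (fun x Sx nSx => nSx Sx).
  - exact: no_sep (mulSGC ha ha nS) h (fun x nSx Sx => nSx Sx).
move=> hT hT' TT'; set P := pattern R (order_act R a) m.
have [av|av] := avoid_one_everywhere (S1 := T `&` P) (S2 := T' `&` P) hM hR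
  (@subIsetr _ T P) (@subIsetr _ T' P) (fun x h1 h2 => TT' x h1.1 h2.1).
- apply: (avoid_not_mul ha ha (av a Ma)).
  exact: (mulSGI ha ha hT (pattern_in_mul m ha fix_a)).
- apply: (avoid_not_in ha (av a Ma)).
  exact: (ultraI (SG_ultra ha m) hT' (pattern_in R m ha)).
Qed.

Theorem mainTheorem18 (M : set SGpt) (a : SGpt) :
  minimal_subflow M -> M a ->
  [<-> idempotentSG a;
       (forall R, LO R -> AM M R (order_act R a));
       (exists R, LO R /\ AM M R (order_act R a))].
Proof.
move=> hM Ma; have LO_ltn : LO (fun u v => u < v).
  split=> [u|u v w|u v /eqP]; [by rewrite ltnn | exact: ltn_trans |].
  by case: ltngtP => // _ _; [left | right].
tfae.
- by move=> ida R hR; apply: AM_of_idempotent.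
- by move=> h; exists (fun u v => u < v); split=> //; apply: h.
- move=> [R [hR hA]]; apply: (idempotent_of_order_act_fix hM Ma hR).
  exact: (order_act_fix_of_AM hM Ma hR hA).
Qed.
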